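(* Let $T=(T_1,\dots,T_m)$ be algebraically independent over $F$, let $g\in F[T]$ be irreducible, and put $F[g]=\mathrm{Frac}(F[T]/(g))$. Let $\phi$ be a quasilinear $p$-form over $F$ and $f\in F[T]$ with $f\in D(\phi_{F(T)})$. If $\phi_{F[g]}$ is anisotropic, then $\mathrm{mult}_g(f)\equiv0\pmod p$.
   Context: Let $p$ be a prime and $F$ a field of characteristic $p$. A quasilinear $p$-form over a field $K$ of char. $p$ is a map $\phi\colon V\to K$ on a nonzero finite-dimensional $K$-vector space, homogeneous of degree $p$ and additive; $D(\phi)$ is its value set; $\phi_K$ the scalar extension; anisotropic means $\phi(v)\ne0$ for all $v\ne0$. $\mathrm{mult}_g(f)$ is the largest $s\ge0$ with $f=g^sh$ for some $h\in F[T]$ (with $\mathrm{mult}_g(0)=+\infty$). *)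

From HB Require Import structures.
From mathcomp Require Import all_boot all_order all_algebra.
Set Implicit Arguments. Unset Strict Implicit. Unset Printing Implicit Defensive.
Import GRing.Theory.
Local Open Scope ring_scope.

(* The polynomial ring F[T_1,...,T_m] in m algebraically independent
   variables, realised as the iterated univariate polynomial ring. *)
Fixpoint mpoly (F : idomainType) (m : nat) : idomainType :=
  match m with
  | O => F
  | S m' => [the idomainType of {poly (mpoly F m')}]
  end.

Fixpoint mconst (F : idomainType) (m : nat) : F -> mpoly F m :=
  match m return F -> mpoly F m with
  | O => fun c => c
  | S m' => fun c => polyC (mconst m' c)
  end.

Definition rdvd (R : idomainType) (a b : R) : Prop := exists h : R, b = a * h.

Definition irreducible_elt (R : idomainType) (g : R) : Prop :=
  g != 0 /\ g \isn't a GRing.unit /\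
  (forall a b : R, g = a * b -> a \is a GRing.unit \/ b \is a GRing.unit).

Definition is_mult (R : idomainType) (g f : R) (s : nat) : Prop :=
  rdvd (g ^+ s) f /\ ~ rdvd (g ^+ s.+1) f.

(* mult_g(f) == 0 mod p  (for f = 0, mult_g(f) = +oo and no finite s is the
   multiplicity, so the condition holds vacuously). *)
Definition mult_cong0 (R : idomainType) (g f : R) (p : nat) : Prop :=
  forall s : nat, is_mult g f s -> (p %| s)%N.

Definition quasilinear_pform (F : fieldType) (V : vectType F) (p : nat)
  (phi : V -> F) : Prop :=
  (0 < \dim (fullv : {vspace V}))%N /\
  (forall x y : V, phi (x + y) = phi x + phi y) /\
  (forall (a : F) (x : V), phi (a *: x) = a ^+ p * phi x).

(* Scalar extension phi_K to V (x)_F K, along a field embedding iota : F -> K.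
   An element of V (x) K is written sum_i c_i (x) b_i in the basis
   b = vbasis fullv of V, and phi_K(sum_i c_i (x) b_i) = sum_i c_i^p iota(phi b_i)
   (the unique additive, p-homogeneous extension). *)
Definition phi_ext (F : fieldType) (V : vectType F) (p : nat) (phi : V -> F)
  (K : fieldType) (iota : F -> K)
  (c : 'I_(\dim (fullv : {vspace V})) -> K) : K :=
  \sum_i c i ^+ p * iota (phi (tnth (vbasis fullv) i)).

Definition value_set (F : fieldType) (V : vectType F) (p : nat) (phi : V -> F)
  (K : fieldType) (iota : F -> K) (x : K) : Prop :=
  exists c, x = phi_ext p phi iota c.

Definition anisotropic_ext (F : fieldType) (V : vectType F) (p : nat)
  (phi : V -> F) (K : fieldType) (iota : F -> K) : Prop :=
  forall c, phi_ext p phi iota c = 0 -> forall i, c i = 0.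

From HB Require Import structures.
From mathcomp Require Import all_boot all_order all_algebra.
From mathcomp Require Import zify.
From Stdlib Require Import Classical.
Set Implicit Arguments.
Unset Strict Implicit.
Unset Printing Implicit Defensive.
Import GRing.Theory.
Local Open Scope ring_scope.

(* Clearing denominators turns [f \in D(phi_F(T))] into an identity
   [f * d^p = \sum_i a_i^p phi(e_i)] in F[T]. Since psi is reduction modulo g,
   anisotropy of phi over F[g] says that if g divides such a sum, then g divides
   every a_i, so g^p divides the sum. Descending, the g-adic valuation of any
   value [\sum_i a_i^p phi(e_i)] is a multiple of p, while that of [f * d^p]
   is [mult_g f + p * mult_g d]. *)

Section AnisotropicDescent.
Variables (R L : idomainType) (psi : {rmorphism R -> L}) (g : R).
Hypothesis ker_psi : forall a : R, psi a = 0 <-> rdvd g a.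
Hypothesis g_neq0 : g != 0.
Variables (p n : nat) (phi : 'I_n -> R).
Hypothesis p_gt0 : (0 < p)%N.
Hypothesis aniso :
  forall c : 'I_n -> L, \sum_i c i ^+ p * psi (phi i) = 0 -> forall i, c i = 0.

Lemma psi_g : psi g = 0.
Proof. by apply/ker_psi; exists 1; rewrite mulr1. Qed.

Lemma anisotropic_kernel_sum (a : 'I_n -> R) :
  psi (\sum_i a i ^+ p * phi i) = 0 ->
  exists b : 'I_n -> R, \sum_i a i ^+ p * phi i = g ^+ p * \sum_i b i ^+ p * phi i.
Proof.
rewrite rmorph_sum; under eq_bigr do rewrite rmorphM rmorphXn.
move=> /aniso psi_a0.
have /fin_all_exists[b def_a] : forall i, exists b, a i = g * b.
  by move=> i; apply/ker_psi/psi_a0.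
exists b; rewrite mulr_sumr; apply: eq_bigr => i _.
by rewrite def_a exprMn mulrA.
Qed.

Lemma anisotropic_valuation_dvdn e v (a : 'I_n -> R) :
  ~ rdvd g v -> g ^+ e * v = \sum_i a i ^+ p * phi i -> (p %| e)%N.
Proof.
elim/ltn_ind: e v a => e IH v a gNv def_sum.
have [psi_sum0 | psi_sum_neq0] := eqVneq (psi (\sum_i a i ^+ p * phi i)) 0.
  have [b def_b] := anisotropic_kernel_sum psi_sum0.
  have [lt_ep | le_pe] := ltnP e p.
    have ge_neq0 : g ^+ e != 0 by rewrite expf_neq0.
    suff def_v : v = g ^+ (p - e) * \sum_i b i ^+ p * phi i.
      case: gNv; exists (g ^+ (p - e).-1 * \sum_i b i ^+ p * phi i).
      by rewrite def_v mulrA -exprS prednK // subn_gt0.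
    apply: (mulfI ge_neq0); rewrite def_sum def_b mulrA -exprD subnKC //.
    exact: ltnW.
  have gp_neq0 : g ^+ p != 0 by rewrite expf_neq0.
  rewrite -(subnK le_pe) dvdn_addr //; apply: (IH (e - p)%N _ v b gNv); first lia.
  by apply: (mulfI gp_neq0); rewrite -def_b -def_sum mulrA -exprD subnKC.
case: e {IH} def_sum => [|e] def_sum; first exact: dvdn0.
by move: psi_sum_neq0; rewrite -def_sum rmorphM rmorphXn psi_g expr0n mul0r eqxx.
Qed.

End AnisotropicDescent.

Definition finite_multiplicity (R : idomainType) :=
  forall g x : R, x != 0 -> g \isn't a GRing.unit -> exists k, ~ rdvd (g ^+ k) x.

Lemma finite_multiplicity_field (F : fieldType) : finite_multiplicity F.
Proof.
move=> g x x_neq0; rewrite unitfE negbK => /eqP ->.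
by exists 1%N => -[h]; rewrite expr1 mul0r; apply/eqP.
Qed.

(* A nonconstant g can divide x at most [size x] times for degree reasons;
   a constant g is a nonunit of R and divides x as often as it divides the
   leading coefficient of x. *)
Lemma finite_multiplicity_poly (R : idomainType) :
  finite_multiplicity R -> finite_multiplicity {poly R}.
Proof.
move=> finR g x x_neq0 gNunit.
have [size_g_le1 | size_g_gt1] := leqP (size g) 1%N.
  have def_g := size1_polyC size_g_le1.
  have g0Nunit : g`_0 \isn't a GRing.unit.
    apply: contra gNunit => g0_unit; rewrite poly_unitE g0_unit andbT def_g.
    rewrite size_polyC; suff -> : g`_0 != 0 by [].
    by apply: contraTneq g0_unit => ->; rewrite unitr0.
  have lead_neq0 : lead_coef x != 0 by rewrite lead_coef_eq0.
  have [k gkNlead] := finR _ _ lead_neq0 g0Nunit.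
  exists k => -[h def_x]; apply: gkNlead; exists h`_(size x).-1.
  rewrite /lead_coef {1}def_x; move: def_g; set c := g`_0 => ->.
  by rewrite -(rmorphXn (@polyC R)) coefCM.
exists (size x) => -[h def_x].
have h_neq0 : h != 0 by apply: contraNneq x_neq0 => h0; rewrite def_x h0 mulr0.
have gx_neq0 : g ^+ size x != 0 by apply: expf_neq0; rewrite -size_poly_gt0; lia.
have size_gx : (size (g ^+ size x)).-1 = ((size g).-1 * size x)%N.
  exact: size_exp.
have size_x : size x = (size (g ^+ size x) + size h).-1.
  by rewrite {1}def_x size_mul.
have size_gx_gt0 : (0 < size (g ^+ size x))%N by rewrite size_poly_gt0.
have size_h_gt0 : (0 < size h)%N by rewrite size_poly_gt0.
have : (size x <= (size g).-1 * size x)%N by rewrite leq_pmull //; lia.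
lia.
Qed.

Lemma finite_multiplicity_mpoly (F : fieldType) m : finite_multiplicity (mpoly F m).
Proof.
elim: m => [|m IH]; [exact: finite_multiplicity_field | exact: finite_multiplicity_poly].
Qed.

Lemma rdvd_split_exact (R : idomainType) (g x : R) k :
  ~ rdvd (g ^+ k) x -> exists j w, x = g ^+ j * w /\ ~ rdvd g w.
Proof.
elim: k x => [|k IH] x gkNx; first by case: gkNx; exists x; rewrite mul1r.
have [[w def_x] | gkNx'] := classic (rdvd (g ^+ k) x); last exact: IH.
exists k, w; split => // -[v def_w]; apply: gkNx; exists v.
by rewrite def_x def_w exprSr mulrA.
Qed.

Lemma tofrac_denominator (R : idomainType) (x : {fraction R}) :
  exists a d : R, d != 0 /\ x * FracField.tofrac d = FracField.tofrac a.
Proof.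
elim/quotW: x => r; exists r.1, r.2; split; first exact: denom_ratioP.
rewrite /FracField.tofrac -!lock -[_ * _]FracField.pi_mul.
apply/eqmodP; rewrite /= FracField.equivfE /FracField.mulf.
rewrite !numden_Ratio ?oner_neq0 ?mulf_neq0 ?denom_ratioP ?oner_neq0 //.
by rewrite !mulr1 mulrC.
Qed.

Lemma common_denominator (R : idomainType) n (c : 'I_n -> {fraction R}) :
  exists (d : R) (a : 'I_n -> R),
    d != 0 /\ forall i, c i * FracField.tofrac d = FracField.tofrac (a i).
Proof.
have /fin_all_exists[nd def_c] : forall i, exists nd : R * R,
    nd.2 != 0 /\ c i * FracField.tofrac nd.2 = FracField.tofrac nd.1.
  by move=> i; have [a [d ?]] := tofrac_denominator (c i); exists (a, d).
exists (\prod_i (nd i).2), (fun i => (nd i).1 * \prod_(j | j != i) (nd j).2).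
split => [|i]; first by apply/prodf_neq0 => i _; case: (def_c i).
rewrite (bigD1 i) //= !rmorphM mulrA (proj2 (def_c i)).
by rewrite rmorph_prod.
Qed.

Theorem mainTheorem14 (p : nat) (F : fieldType) (hp : prime p)
  (hchar : p \in [pchar F]) (m : nat)
  (g f : mpoly F m) (hg : irreducible_elt g)
  (V : vectType F) (phi : V -> F) (hphi : quasilinear_pform p phi)
  (hf : value_set p phi (fun c : F => FracField.tofrac (mconst m c))
          (FracField.tofrac f))
  (L : fieldType) (psi : {rmorphism mpoly F m -> L})
  (hker : forall a : mpoly F m, psi a = 0 <-> rdvd g a)
  (hgen : forall x : L, exists a b : mpoly F m, psi b != 0 /\ x = psi a / psi b)
  (haniso : anisotropic_ext p phi (fun c : F => psi (mconst m c))) :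
  mult_cong0 g f p.
Proof.
move=> s [[u def_f] gs1Nf].
have gNu : ~ rdvd g u.
  by case=> v def_u; apply: gs1Nf; exists v; rewrite def_f def_u exprSr mulrA.
case: hg => g_neq0 [gNunit _]; case: hf => c def_tf.
set n := \dim (fullv : {vspace V}) in c def_tf haniso *.
pose ph (i : 'I_n) := mconst m (phi (tnth (vbasis fullv) i)).
have [d [a [d_neq0 def_c]]] := common_denominator c.
have [k gkNd] := finite_multiplicity_mpoly d_neq0 gNunit.
have [j [w [def_d gNw]]] := rdvd_split_exact gkNd.
have cleared : f * d ^+ p = \sum_i a i ^+ p * ph i.
  apply/eqP; rewrite -tofrac_eq rmorphM rmorphXn /= def_tf mulr_suml rmorph_sum.
  apply/eqP/eq_bigr => i _.
  by rewrite /= rmorphM rmorphXn /= -def_c exprMn mulrAC.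
have gNuw : ~ rdvd g (u * w ^+ p).
  move/hker/eqP; rewrite rmorphM rmorphXn mulf_eq0 expf_eq0 prime_gt0 //=.
  by case/orP => /eqP/hker.
rewrite -(dvdn_addr s (dvdn_mull j (dvdnn p))).
apply: (anisotropic_valuation_dvdn hker g_neq0 (prime_gt0 hp) haniso (a := a) gNuw).
by rewrite -cleared def_f def_d exprMn -exprM mulrACA -exprD addnC.
Qed.
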